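(* Let $A_1,\dots,A_n$ be arbitrary groups with $n\ge 2$, let $G\subset A_1\times\dots\times A_n$ be the subgroup generated by a finite set $S=\{s_1,\dots,s_k\}$, and let $p_i:G\to A_i$ be the projections. Assume that for each $i$ there is a finite set $R_i$ of words on $S\cup S^{-1}$ with $p_i(G)=RF_{na}(\langle S\mid R_i\rangle)$. Let $$\tilde R=[R_n^{S_0},[R_{n-1}^{S_0},\dots[R_3^{S_0},[R_2^{S_0},R_1]]\dots]].$$ Then $\tilde R$ is a finite set of $na$-equations for $RF_{na}(G)$ over $S$, i.e. $RF_{na}(G)=RF_{na}(\langle S\mid\tilde R\rangle)$.
   Context: $\mathbb F$ denotes a non-abelian free group and $F(S)$ the free group on $S$. For a group $H$, $RF_{na}(H)$ is the quotient of $H$ by the intersection of the kernels of all homomorphisms $H\to\mathbb F$ with non-abelian image. An equality such as $p_i(G)=RF_{na}(\langle S\mid R_i\rangle)$ means there is an isomorphism commuting with the natural projections from $F(S)$ (here $s_j\mapsto p_i(s_j)$); similarly for the conclusion, where $F(S)\to G$ sends $s_j$ to $s_j$. Notation: $S_0=S\cup\{1\}$; for sets $R,R'$ of words on $S\cup S^{-1}$, $R^{S_0}$ is the set of words obtained by conjugating elements of $R$ by elements of $S_0$, and $[R^{S_0},R']$ is the set of commutators $[u,v]$ with $u\in R^{S_0}$, $v\in R'$. *)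

From mathcomp Require Import all_boot.
Set Implicit Arguments. Unset Strict Implicit. Unset Printing Implicit Defensive.

Record group := Group {
  gcar :> Type;
  gmul : gcar -> gcar -> gcar;
  gone : gcar;
  ginv : gcar -> gcar;
  gmulA : forall x y z, gmul x (gmul y z) = gmul (gmul x y) z;
  gmul1g : forall x, gmul gone x = x;
  gmulg1 : forall x, gmul x gone = x;
  gmulVg : forall x, gmul (ginv x) x = gone;
  gmulgV : forall x, gmul x (ginv x) = gone
}.

(* a letter (j, b) stands for s_j if b = false and s_j^{-1} if b = true *)
Definition word (k : nat) := seq ('I_k * bool).

Definition word_inv k (w : word k) : word k :=
  rev (map (fun l => (l.1, ~~ l.2)) w).

Definition gen_word k (j : 'I_k) : word k := [:: (j, false)].

Definition word_conj k (u v : word k) : word k := word_inv v ++ u ++ v.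

Definition word_comm k (u v : word k) : word k :=
  word_inv u ++ word_inv v ++ u ++ v.

(* R^{S_0}: conjugates of elements of R by elements of S_0 = S ∪ {1} *)
Definition conjS0 k (R : seq (word k)) : seq (word k) :=
  R ++ [seq word_conj r (gen_word j) | r <- R, j <- enum 'I_k].

Definition comm_set k (R R' : seq (word k)) : seq (word k) :=
  [seq word_comm u v | u <- R, v <- R'].

(* R_1, ..., R_n indexed by 'I_n (0-based); Rnat m = R_(m+1) *)
Definition Rnat n k (R : 'I_n -> seq (word k)) (m : nat) : seq (word k) :=
  if insub m is Some i then R i else [::].

Fixpoint Rtilde_aux n k (R : 'I_n -> seq (word k)) (m : nat) : seq (word k) :=
  match m with
  | 0 => Rnat R 0
  | m'.+1 => comm_set (conjS0 (Rnat R m)) (Rtilde_aux R m')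
  end.

(* R~ = [R_n^{S_0}, [R_(n-1)^{S_0}, ... [R_2^{S_0}, R_1] ...]] *)
Definition Rtilde n k (R : 'I_n -> seq (word k)) : seq (word k) :=
  Rtilde_aux R n.-1.

Definition geval (A : group) k (g : 'I_k -> A) (w : word k) : A :=
  foldr (fun l acc => gmul (if l.2 then ginv (g l.1) else g l.1) acc)
        (gone A) w.

(* letters (x, e): generator x (false = a, true = b), inverted iff e *)
Definition fletter := (bool * bool)%type.
Definition fword := seq fletter.
Definition finv_letter (l : fletter) : fletter := (l.1, ~~ l.2).
Definition finv (w : fword) : fword := rev (map finv_letter w).

(* free reduction; reduced words are the elements of 𝔽 *)
Definition fpush (l : fletter) (w : fword) : fword :=
  if w is l' :: w' then (if l' == finv_letter l then w' else l :: w) else [:: l].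
Definition freduce (w : fword) : fword := foldr fpush [::] w.

Definition feval k (phi : 'I_k -> fword) (w : word k) : fword :=
  freduce (flatten (map (fun l => if l.2 then finv (phi l.1) else phi l.1) w)).

Definition nonab_image k (phi : 'I_k -> fword) : Prop :=
  exists u v : word k, feval phi (u ++ v) <> feval phi (v ++ u).

(* phi kills every relator of R (i.e. factors through <S | R>) *)
Definition kills k (phi : 'I_k -> fword) (R : seq (word k)) : Prop :=
  forall r, r \in R -> feval phi r = [::].

(* w lies in the kernel of F(S) -> RF_na(<S | R>) *)
Definition ker_RFna_pres k (R : seq (word k)) (w : word k) : Prop :=
  forall phi : 'I_k -> fword, kills phi R -> nonab_image phi -> feval phi w = [::].

(* G = <s_1,...,s_k> ⊂ A_1 × ... × A_n : w = 1 in G *)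
Definition trivial_in_G n (A : 'I_n -> group) k (s : 'I_k -> forall i, A i)
  (w : word k) : Prop :=
  forall i : 'I_n, geval (fun j => s j i) w = gone (A i).

(* phi : F(S) -> 𝔽 factors through F(S) -> G (i.e. is a hom G -> 𝔽) *)
Definition factors_through_G n (A : 'I_n -> group) k (s : 'I_k -> forall i, A i)
  (phi : 'I_k -> fword) : Prop :=
  forall u : word k, trivial_in_G s u -> feval phi u = [::].

(* w lies in the kernel of F(S) -> G -> RF_na(G) *)
Definition ker_RFna_G n (A : 'I_n -> group) k (s : 'I_k -> forall i, A i)
  (w : word k) : Prop :=
  forall phi : 'I_k -> fword,
    factors_through_G s phi -> nonab_image phi -> feval phi w = [::].

From Pilot Require Import Defs.
From mathcomp Require Import all_boot.
From Stdlib Require Import ZArith Lia Classical.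
Set Implicit Arguments. Unset Strict Implicit. Unset Printing Implicit Defensive.

(* Both kernels are intersections of kernels of homomorphisms
   phi : F(S) -> F(a, b) with non-abelian image (those factoring through G,
   resp. killing R~), so it suffices to show that such a phi factors through
   G iff it kills R~.  Everything rests on one fact
   about the free group (free_commutation_lemma): if phi(r), phi(t) are
   nontrivial, phi[r, t] = 1 and phi[r^(s_j), t] = 1 for every generator s_j,
   then the image of phi is abelian.

   We prove it with the faithful Sanov representation of F(a, b) in the
   congruence subgroup Gamma(2) of SL_2(Z) (faithfulness by ping-pong on Z^2).
   For integer matrices, commutation with a fixed nonscalar matrix is
   transitive, and a nonscalar Y commuting with its conjugate by G in Gamma(2)
   commutes with G; together these force the generators to commute.

   Then: if phi kills R~ = T_(n-1), where T_0 = R_1 and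
   T_(m+1) = [R_(m+2)^S_0, T_m], the commutation lemma peels off one layer at
   a time until phi kills some R_i, so it factors through p_i(G) and hence G.
   Conversely, if phi factors through G, the kernels of the p_i intersect
   trivially, so nested commutators show that phi kills some ker p_i, hence
   R_i, hence R~.
*)

Section IntegerMatrices.
Local Open Scope Z_scope.

Record mat := Mat { m11 : Z; m12 : Z; m21 : Z; m22 : Z }.

Definition mmul (P Q : mat) : mat :=
  Mat (m11 P * m11 Q + m12 P * m21 Q) (m11 P * m12 Q + m12 P * m22 Q)
      (m21 P * m11 Q + m22 P * m21 Q) (m21 P * m12 Q + m22 P * m22 Q).
Definition mI := Mat 1 0 0 1.
Definition mN := Mat (-1) 0 0 (-1).
Definition madj (P : mat) := Mat (m22 P) (- m12 P) (- m21 P) (m11 P).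
Definition mdet P := m11 P * m22 P - m12 P * m21 P.

Definition cong2 P :=
  [&& Z.odd (m11 P), ~~ Z.odd (m12 P), ~~ Z.odd (m21 P) & Z.odd (m22 P)].

(* The principal congruence subgroup Gamma(2) of SL_2(Z); the Sanov
   representation of the free group takes its values there. *)
Definition gamma2 P := mdet P = 1 /\ cong2 P.

Ltac mat_entries :=
  repeat match goal with P : mat |- _ => destruct P end;
  unfold mmul, madj, mI, mN, mdet in *; cbn [m11 m12 m21 m22] in *.

Lemma mmulA P Q R : mmul P (mmul Q R) = mmul (mmul P Q) R.
Proof. mat_entries; f_equal; ring. Qed.

Lemma mmul1m P : mmul mI P = P.
Proof. mat_entries; f_equal; ring. Qed.

Lemma mmulm1 P : mmul P mI = P.
Proof. mat_entries; f_equal; ring. Qed.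

Lemma madj_mul P Q : madj (mmul P Q) = mmul (madj Q) (madj P).
Proof. mat_entries; f_equal; ring. Qed.

Lemma madjK P : madj (madj P) = P.
Proof. mat_entries; f_equal; ring. Qed.

Lemma mdet_mul P Q : mdet (mmul P Q) = mdet P * mdet Q.
Proof. mat_entries; ring. Qed.

Lemma mulm_adj P : mdet P = 1 -> mmul P (madj P) = mI.
Proof. mat_entries => H; f_equal; lia. Qed.

Lemma mul_adjm P : mdet P = 1 -> mmul (madj P) P = mI.
Proof. mat_entries => H; f_equal; lia. Qed.

Lemma gamma2_mul P Q : gamma2 P -> gamma2 Q -> gamma2 (mmul P Q).
Proof.
move=> [dP cP] [dQ cQ]; split; first by rewrite mdet_mul dP dQ.
move: cP cQ {dP dQ}; case: P => a b c d; case: Q => e f g h.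
rewrite /cong2 /mmul /= !Z.odd_add !Z.odd_mul.
by case: (Z.odd a); case: (Z.odd b); case: (Z.odd c); case: (Z.odd d);
   case: (Z.odd e); case: (Z.odd f); case: (Z.odd g); case: (Z.odd h).
Qed.

Lemma gamma2_adj P : gamma2 P -> gamma2 (madj P).
Proof.
case: P => a b c d [dP cP]; split; [by rewrite /mdet /madj /= in dP *; lia|].
by move: cP; rewrite /cong2 /madj /= !Z.odd_opp => /and4P [-> -> -> ->].
Qed.

Lemma gamma2_I : gamma2 mI.
Proof. by split. Qed.

Section Commutation.

Definition mcomm P Q := mmul P Q = mmul Q P.

(* The traceless part of P is determined by the vector (vx P, m12 P, m21 P);
   two matrices commute iff these vectors are parallel. *)
Definition vx P := m11 P - m22 P.
Definition parallel P Q :=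
  [/\ vx P * m12 Q = m12 P * vx Q, vx P * m21 Q = m21 P * vx Q
    & m12 P * m21 Q = m21 P * m12 Q].
Definition nonscalar P := ~ [/\ vx P = 0, m12 P = 0 & m21 P = 0].

Lemma mcomm_parallel P Q : mcomm P Q <-> parallel P Q.
Proof.
case: P => a b c d; case: Q => e f g h; rewrite /mcomm /parallel /vx /mmul /=.
split => [E|[E1 E2 E3]]; last by f_equal; lia.
by injection E => *; split; lia.
Qed.

Lemma mcomm_sym P Q : mcomm P Q -> mcomm Q P.
Proof. exact: esym. Qed.

Lemma mcomm_I P : mcomm P mI.
Proof. by rewrite /mcomm mmul1m mmulm1. Qed.

Lemma mcomm_adj P Q : mcomm P Q -> mcomm P (madj Q).
Proof. rewrite /mcomm; mat_entries => E; injection E => *; f_equal; lia. Qed.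

Lemma mcomm_mul P Q Q' : mcomm P Q -> mcomm P Q' -> mcomm P (mmul Q Q').
Proof. by rewrite /mcomm => E E'; rewrite mmulA E -mmulA E' mmulA. Qed.

(* If an integer vector x is parallel to p and to q, and m is the coordinate
   of x at some index, then m^2 kills every 2x2 minor of (p, q). *)
Lemma minor_scaled m pi pj qi qj xi xj pm qm :
  m * pi = xi * pm -> m * qj = xj * qm -> m * pj = xj * pm -> m * qi = xi * qm ->
  m * m * (pi * qj - pj * qi) = 0.
Proof.
move=> E1 E2 E3 E4.
have -> : m * m * (pi * qj - pj * qi) = (m * pi) * (m * qj) - (m * pj) * (m * qi) by ring.
by rewrite E1 E2 E3 E4; ring.
Qed.

(* Parallelism to a fixed nonzero vector is transitive; hence commutation
   with a fixed nonscalar matrix is an equivalence relation. *)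
Lemma parallel_trans X P Q : nonscalar X -> parallel X P -> parallel X Q -> parallel P Q.
Proof.
case: X => a b c d; case: P => e f g h; case: Q => i j k l.
rewrite /nonscalar /parallel /vx /=.
set x := a - d; set p := e - h; set q := i - l.
move=> NS [H1 H2 H3] [H4 H5 H6].
suff [m [Hm E1 E2 E3]] : exists m, [/\ m <> 0, m * m * (p * j - f * q) = 0,
    m * m * (p * k - g * q) = 0 & m * m * (f * k - g * j) = 0].
  have Hmm : m * m <> 0 by nia.
  by split; apply: (Z.mul_reg_l _ _ (m * m)) => //; lia.
have [Hx|Hx] := Z.eq_dec x 0; last first.
  exists x; split => //.
  - by apply: (@minor_scaled x _ _ _ _ x b p q); lia.
  - by apply: (@minor_scaled x _ _ _ _ x c p q); lia.
  - by apply: (@minor_scaled x _ _ _ _ b c p q); lia.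
have [Hb|Hb] := Z.eq_dec b 0; last first.
  exists b; split => //.
  - by apply: (@minor_scaled b _ _ _ _ x b f j); lia.
  - by apply: (@minor_scaled b _ _ _ _ x c f j); lia.
  - by apply: (@minor_scaled b _ _ _ _ b c f j); lia.
have [Hc|Hc] := Z.eq_dec c 0; last first.
  exists c; split => //.
  - by apply: (@minor_scaled c _ _ _ _ x b g k); lia.
  - by apply: (@minor_scaled c _ _ _ _ x c g k); lia.
  - by apply: (@minor_scaled c _ _ _ _ b c g k); lia.
by case: NS.
Qed.

Lemma nonscalar_det1 P : mdet P = 1 -> P <> mI -> P <> mN -> nonscalar P.
Proof.
case: P => a b c d; rewrite /nonscalar /vx /mdet /mI /mN /=.
move=> D N1 N2 [H1 H2 H3]; subst.
have /Z.eq_mul_1 [Ha|Ha] : a * a = 1 by nia.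
- by apply: N1; f_equal; lia.
- by apply: N2; f_equal; lia.
Qed.

Lemma mcomm_commutator U T : mdet U = 1 -> mdet T = 1 ->
  mmul (madj U) (mmul (madj T) (mmul U T)) = mI <-> mcomm U T.
Proof.
move=> dU dT; split => [E|]; last first.
  rewrite /mcomm => ->.
  by rewrite !mmulA -(mmulA (madj U)) (mul_adjm dT) mmulm1 (mul_adjm dU).
rewrite /mcomm; have := f_equal (mmul (mmul T U)) E; rewrite mmulm1 => <-.
by rewrite !mmulA -(mmulA T U) (mulm_adj dU) mmulm1 (mulm_adj dT) mmul1m.
Qed.
End Commutation.

Section Conjugation.

Definition mconj G M := mmul (mmul (madj G) M) G.

Lemma mconjK G M : mdet G = 1 -> mconj (madj G) (mconj G M) = M.
Proof.
move=> dG; rewrite /mconj madjK.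
by rewrite -!mmulA (mulm_adj dG) mmulm1 !mmulA (mulm_adj dG) mmul1m.
Qed.

Lemma mconj_trace G M : m11 (mconj G M) + m22 (mconj G M) = mdet G * (m11 M + m22 M).
Proof. rewrite /mconj; mat_entries; ring. Qed.

Lemma mconj_vx G M :
  [/\ vx (mconj G M) = vx M * (m11 G * m22 G + m12 G * m21 G)
        + m12 M * (2 * m21 G * m22 G) + m21 M * (- 2 * m11 G * m12 G),
      m12 (mconj G M) = vx M * (m22 G * m12 G) + m12 M * (m22 G * m22 G)
        + m21 M * (- m12 G * m12 G)
    & m21 (mconj G M) = vx M * (- m21 G * m11 G) + m12 M * (- m21 G * m21 G)
        + m21 M * (m11 G * m11 G)].
Proof. rewrite /mconj /vx; mat_entries; split; ring. Qed.

Lemma mat_eq P Q : vx P = vx Q -> m12 P = m12 Q -> m21 P = m21 Q ->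
  m11 P + m22 P = m11 Q + m22 Q -> P = Q.
Proof. case: P => a b c d; case: Q => e f g h; rewrite /vx /= => *; f_equal; lia. Qed.

Definition gcd3 (a b c : Z) := Z.gcd (Z.gcd a b) c.
Definition content P := gcd3 (vx P) (m12 P) (m21 P).

Lemma gcd3_mul m a b c : gcd3 (m * a) (m * b) (m * c) = Z.abs m * gcd3 a b c.
Proof.
rewrite /gcd3 Z.gcd_mul_mono_l -(Z.gcd_abs_r _ (m * c)) Z.abs_mul.
by rewrite Z.gcd_mul_mono_l Z.abs_idemp Z.gcd_abs_r.
Qed.

Lemma gcd3_greatest z a b c : (z | a) -> (z | b) -> (z | c) -> (z | gcd3 a b c).
Proof. by move=> ha hb hc; apply: Z.gcd_greatest => //; apply: Z.gcd_greatest. Qed.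

Lemma gcd3_divide a b c : [/\ (gcd3 a b c | a), (gcd3 a b c | b) & (gcd3 a b c | c)].
Proof.
split; last exact: Z.gcd_divide_r.
- exact: Z.divide_trans (Z.gcd_divide_l _ _) (Z.gcd_divide_l _ _).
- exact: Z.divide_trans (Z.gcd_divide_l _ _) (Z.gcd_divide_r _ _).
Qed.

Lemma gcd3_eq0 a b c : gcd3 a b c = 0 -> [/\ a = 0, b = 0 & c = 0].
Proof. by rewrite /gcd3 => /Z.gcd_eq_0 [/Z.gcd_eq_0 [? ?] ?]. Qed.

Lemma abs_eq_of_content m m' x1 x2 x3 y1 y2 y3 : ~ [/\ x1 = 0, x2 = 0 & x3 = 0] ->
  gcd3 x1 x2 x3 = gcd3 y1 y2 y3 ->
  m * y1 = m' * x1 -> m * y2 = m' * x2 -> m * y3 = m' * x3 ->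
  Z.abs m = Z.abs m'.
Proof.
move=> NZ Hg E1 E2 E3.
have := gcd3_mul m y1 y2 y3; rewrite E1 E2 E3 gcd3_mul -Hg => H.
have Hg0 : gcd3 x1 x2 x3 <> 0 by move/gcd3_eq0.
by apply: (Z.mul_reg_r _ _ (gcd3 x1 x2 x3)) => //; lia.
Qed.

Lemma parallel_same_content x1 x2 x3 y1 y2 y3 : ~ [/\ x1 = 0, x2 = 0 & x3 = 0] ->
  gcd3 x1 x2 x3 = gcd3 y1 y2 y3 ->
  x1 * y2 = x2 * y1 -> x1 * y3 = x3 * y1 -> x2 * y3 = x3 * y2 ->
  [/\ y1 = x1, y2 = x2 & y3 = x3] \/ [/\ y1 = - x1, y2 = - x2 & y3 = - x3].
Proof.
move=> NZ Hg E1 E2 E3.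
suff [m [m' [Hm F1 F2 F3]]] : exists m m', [/\ m <> 0, m * y1 = m' * x1,
    m * y2 = m' * x2 & m * y3 = m' * x3].
  have [Em|Em] := Z.abs_eq_cases _ _ (abs_eq_of_content NZ Hg F1 F2 F3); subst m.
  - by left; split; apply: (Z.mul_reg_l _ _ m') => //; lia.
  - by right; split; apply: (Z.mul_reg_l _ _ m') => //; lia.
have [H1|H1] := Z.eq_dec x1 0; last by exists x1, y1; split; lia.
have [H2|H2] := Z.eq_dec x2 0; last by exists x2, y2; split; lia.
have [H3|H3] := Z.eq_dec x3 0; last by exists x3, y3; split; lia.
by case: NZ.
Qed.

Lemma content_mconj G M : mdet G = 1 -> content (mconj G M) = content M.
Proof.
have dvd G' M' : (content M' | content (mconj G' M')).
  have [d1 d2 d3] := gcd3_divide (vx M') (m12 M') (m21 M').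
  rewrite /content; have [-> -> ->] := mconj_vx G' M'.
  by apply: gcd3_greatest; repeat apply: Z.divide_add_r; apply: Z.divide_mul_l.
move=> dG; apply: Z.divide_antisym_nonneg; [exact: Z.gcd_nonneg | exact: Z.gcd_nonneg | | exact: dvd].
by have := dvd (madj G) (mconj G M); rewrite mconjK.
Qed.

(* An element of Gamma(2) has nonzero trace (its trace is 2 mod 4). *)
Lemma gamma2_trace G : gamma2 G -> m11 G + m22 G <> 0.
Proof.
case: G => e f g h; rewrite /gamma2 /cong2 /mdet /=.
move=> [Hd /and4P [He Hf Hg Hh]] Ht.
move/Z.odd_spec: He => [x Hx]; move/Z.odd_spec: Hh => [y Hy].
move: Hf; rewrite Z.negb_odd => /Z.even_spec [u Hu].
move: Hg; rewrite Z.negb_odd => /Z.even_spec [v Hv].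
by subst; nia.
Qed.

(* An element of Gamma(2) never conjugates a nonscalar Y to its adjugate,
   whose traceless part is opposite to that of Y. *)
Lemma gamma2_conj_neq_adj Y G : gamma2 G -> nonscalar Y -> mmul G (madj Y) <> mmul Y G.
Proof.
move=> /gamma2_trace; case: Y => a b c d; case: G => e f g h.
rewrite /nonscalar /vx /mmul /madj /= => Ht NS E; injection E => F4 F3 F2 F1.
have Q1 : (a - d) * (e + h) = 0 by lia.
have Q2 : b * (e + h) = 0 by lia.
have Q3 : c * (e + h) = 0 by lia.
apply: NS; split.
- by move/Z.mul_eq_0: Q1 => [|]; lia.
- by move/Z.mul_eq_0: Q2 => [|]; lia.
- by move/Z.mul_eq_0: Q3 => [|]; lia.
Qed.

Lemma mcomm_of_mcomm_conj Y G : gamma2 G -> nonscalar Y -> mcomm Y (mconj G Y) -> mcomm Y G.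
Proof.
move=> gG NS /mcomm_parallel [P1 P2 P3].
have dG : mdet G = 1 by case: gG.
have Htr := mconj_trace G Y; rewrite dG Z.mul_1_l in Htr.
have GY : mmul G (mconj G Y) = mmul Y G by rewrite /mconj !mmulA (mulm_adj dG) mmul1m.
have [[E1 E2 E3]|[E1 E2 E3]] :=
  parallel_same_content NS (esym (content_mconj Y dG)) P1 P2 P3.
- have EY : mconj G Y = Y by apply: mat_eq.
  by rewrite /mcomm -GY EY.
- have EY : mconj G Y = madj Y.
    by apply: mat_eq; rewrite ?E1 ?E2 ?E3 ?Htr /vx /madj /=; lia.
  by rewrite EY in GY; case: (gamma2_conj_neq_adj gG NS GY).
Qed.

Lemma gamma2_family_commutes I X Y (G : I -> mat) : (forall j, gamma2 (G j)) ->
  nonscalar X -> nonscalar Y -> mcomm X Y -> (forall j, mcomm X (mconj (G j) Y)) ->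
  forall j j', mcomm (G j) (G j').
Proof.
move=> gG NX NY /mcomm_parallel XY XG j j'.
have YG i : parallel Y (G i).
  apply/mcomm_parallel; apply: mcomm_of_mcomm_conj => //; apply/mcomm_parallel.
  by apply: parallel_trans NX XY _; apply/mcomm_parallel.
by apply/mcomm_parallel; apply: parallel_trans NY (YG j) (YG j').
Qed.
End Conjugation.

End IntegerMatrices.

Section SanovRepresentation.
Local Open Scope Z_scope.

Definition Ml (l : fletter) : mat :=
  match l with
  | (false, false) => Mat 1 2 0 1
  | (false, true) => Mat 1 (-2) 0 1
  | (true, false) => Mat 1 0 2 1
  | (true, true) => Mat 1 0 (-2) 1
  end.
Definition Mf (w : fword) : mat := foldr (fun l acc => mmul (Ml l) acc) mI w.

Lemma Ml_inv l : mmul (Ml l) (Ml (finv_letter l)) = mI.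
Proof. by case: l => [[] []]; rewrite /mmul /mI /=; f_equal. Qed.

Lemma Ml_finv l : Ml (finv_letter l) = madj (Ml l).
Proof. by case: l => [[] []]. Qed.

Lemma gamma2_Ml l : gamma2 (Ml l).
Proof. by case: l => [[] []]; split. Qed.

Lemma gamma2_Mf w : gamma2 (Mf w).
Proof. elim: w => [|l w IH] /=; [exact: gamma2_I | exact: gamma2_mul (gamma2_Ml l) IH]. Qed.

Lemma Mf_cat u v : Mf (u ++ v) = mmul (Mf u) (Mf v).
Proof. by elim: u => [|l u IH] /=; [rewrite mmul1m | rewrite IH mmulA]. Qed.

Lemma Mf_fpush l w : Mf (fpush l w) = mmul (Ml l) (Mf w).
Proof.
case: w => [|l' w] //=; case: eqP => [->|] //=.
by rewrite mmulA Ml_inv mmul1m.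
Qed.

Lemma Mf_freduce w : Mf (freduce w) = Mf w.
Proof. by elim: w => [|l w IH] //=; rewrite Mf_fpush IH. Qed.

Lemma Mf_finv w : Mf (Defs.finv w) = madj (Mf w).
Proof.
elim: w => [|l w IH] //=.
rewrite /Defs.finv map_cons rev_cons -cats1 Mf_cat -/(Defs.finv w) IH /= mmulm1.
by rewrite madj_mul -Ml_finv.
Qed.

Definition no_cancel (l l' : fletter) : bool := l' != finv_letter l.
Definition reduced (w : fword) := sorted no_cancel w.

Lemma finv_letterK l : finv_letter (finv_letter l) = l.
Proof. by case: l => a b; rewrite /finv_letter /= negbK. Qed.

Lemma reduced_freduce w : reduced (freduce w).
Proof.
elim: w => [|l w IH] //=; move: IH; case: (freduce w) => [|l' w'] //=.
case: eqP => [_ /path_sorted //|NE H].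
by rewrite /= /no_cancel H andbT; apply/eqP.
Qed.

Lemma reduced_finv w : reduced w -> reduced (Defs.finv w).
Proof.
rewrite /reduced /Defs.finv rev_sorted sorted_map.
have E x y : relpre finv_letter (fun z => no_cancel^~ z) x y = no_cancel x y.
  by rewrite /= /no_cancel; apply/idP/idP => /eqP H; apply/eqP => E; apply: H;
    rewrite ?E finv_letterK // -E finv_letterK.
by case: w => [|l w] //=; rewrite (eq_path E).
Qed.

Lemma reduced_cat s x y t : reduced (rcons s x) -> reduced (y :: t) -> no_cancel x y ->
  reduced (rcons s x ++ y :: t).
Proof.
rewrite /reduced; case: s => [|z s] /=; first by move=> _ -> ->.
by rewrite cat_path last_rcons => -> /= -> ->.
Qed.

(* Ping-pong: the four open cones of Z^2 attached to the letters. A reduced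
   word starting with l maps a suitable seed vector into the cone of l. *)
Definition cone (l : fletter) (v : Z * Z) : Prop :=
  let x := v.1 in let y := v.2 in
  match l with
  | (false, false) => (x > y /\ y > 0) \/ (x < y /\ y < 0)
  | (false, true) => (x > 0 /\ y < 0 /\ x > - y) \/ (x < 0 /\ y > 0 /\ - x > y)
  | (true, false) => (y > x /\ x > 0) \/ (y < x /\ x < 0)
  | (true, true) => (y > 0 /\ x < 0 /\ y > - x) \/ (y < 0 /\ x > 0 /\ - y > x)
  end.

Definition mact (M : mat) (v : Z * Z) :=
  (m11 M * v.1 + m12 M * v.2, m21 M * v.1 + m22 M * v.2).

Definition seed (l : fletter) : Z * Z := if l.1 then (1, 0) else (0, 1).

Lemma mact_mul P Q v : mact (mmul P Q) v = mact P (mact Q v).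
Proof. by case: P Q v => [a b c d] [e f g h] [x y]; rewrite /mact /mmul /=; f_equal; ring. Qed.

Lemma cone_step l l' v : cone l' v -> no_cancel l l' -> cone l (mact (Ml l) v).
Proof.
case: v => x y; case: l => [[] []]; case: l' => [[] []] => C /eqP N;
  try (by exfalso; apply: N); move: C; rewrite /cone /mact; cbn [m11 m12 m21 m22 fst snd Ml]; lia.
Qed.

Lemma cone_seed l : cone l (mact (Ml l) (seed l)).
Proof. by case: l => [[] []]; rewrite /cone /mact /seed; cbn [m11 m12 m21 m22 fst snd Ml]; lia. Qed.

Lemma cone_reduced l w : reduced (l :: w) -> cone l (mact (Mf (l :: w)) (seed (last l w))).
Proof.
elim: w l => [|l' w IH] l; first by rewrite /= mmulm1 => _; exact: cone_seed.
rewrite /reduced /= => /andP [H1 H2].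
by rewrite mact_mul; apply: cone_step (IH l' H2) H1.
Qed.

Lemma Mf_nontrivial w : reduced w -> w <> [::] -> Mf w <> mI /\ Mf w <> mN.
Proof.
case: w => [|l w] // R _; move: (cone_reduced R).
case: (last l w) => [[] []]; rewrite /seed /= => C; split => E; move: C;
  rewrite E /cone /mact /mI /mN; cbn [m11 m12 m21 m22 fst snd];
  case: l {R E} => [[] []]; cbn; lia.
Qed.

Lemma Mf_inj a b : reduced a -> reduced b -> Mf a = Mf b -> a = b.
Proof.
elim: a b => [|l a IH] [|l' b] Ra Rb E //.
- by have [] := Mf_nontrivial Rb => //; rewrite -E.
- by have [] := Mf_nontrivial Ra => //; rewrite E.
case: (l =P l') => [El|NE].
  subst l'; congr (_ :: _); apply: IH; [exact: path_sorted Ra | exact: path_sorted Rb |].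
  have [d _] := gamma2_Ml l.
  by move: E => /= /(f_equal (mmul (madj (Ml l)))); rewrite !mmulA (mul_adjm d) !mmul1m.
set c := Defs.finv (l :: a) ++ l' :: b.
have Rc : reduced c.
  rewrite /c /Defs.finv map_cons rev_cons; apply: reduced_cat => //.
  - by rewrite -rev_cons -map_cons; exact: reduced_finv.
  - by rewrite /no_cancel finv_letterK; apply/eqP => E'; apply: NE.
have [] := Mf_nontrivial Rc; first by rewrite /c; case: (Defs.finv (l :: a)).
rewrite /c Mf_cat Mf_finv -E; have [d _] := gamma2_Mf (l :: a).
by rewrite mul_adjm.
Qed.
End SanovRepresentation.

Section WordsInTheFreeGroup.
Variables (k : nat) (phi : 'I_k -> fword).

Definition gen_mat (j : 'I_k) := Mf (phi j).
Definition letter_mat (l : 'I_k * bool) := if l.2 then madj (gen_mat l.1) else gen_mat l.1.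
Definition word_mat (w : word k) := foldr (fun l acc => mmul (letter_mat l) acc) mI w.

Lemma Mf_feval w : Mf (feval phi w) = word_mat w.
Proof.
rewrite /feval Mf_freduce; elim: w => [|l w IH] //=.
by rewrite Mf_cat IH /letter_mat /gen_mat; case: l.2; rewrite ?Mf_finv.
Qed.

Lemma feval_eq u v : feval phi u = feval phi v <-> word_mat u = word_mat v.
Proof.
split => [E|E]; first by rewrite -!Mf_feval E.
by apply: Mf_inj; rewrite ?Mf_feval ?E //; exact: reduced_freduce.
Qed.

Lemma feval_nil w : feval phi w = [::] <-> word_mat w = mI.
Proof. exact: (feval_eq w [::]). Qed.

Lemma word_mat_cat u v : word_mat (u ++ v) = mmul (word_mat u) (word_mat v).
Proof. by elim: u => [|l u IH] /=; [rewrite mmul1m | rewrite IH mmulA]. Qed.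

Lemma gamma2_word_mat w : gamma2 (word_mat w).
Proof.
elim: w => [|l w IH] /=; first exact: gamma2_I.
apply: gamma2_mul IH; rewrite /letter_mat /gen_mat.
by case: l.2; [apply: gamma2_adj|]; exact: gamma2_Mf.
Qed.

Lemma word_mat_neqN w : word_mat w <> mN.
Proof.
rewrite -Mf_feval; case E: (feval phi w) => [|l w'] //.
by have [] := Mf_nontrivial (reduced_freduce _ : reduced (feval phi w)); rewrite E.
Qed.

Lemma word_mat_inv u : word_mat (word_inv u) = madj (word_mat u).
Proof.
elim: u => [|l u IH] //=.
rewrite /word_inv map_cons rev_cons -cats1 word_mat_cat -/(word_inv u) IH /= mmulm1.
by rewrite madj_mul /letter_mat /=; case: l.2; rewrite /= ?madjK.
Qed.

Lemma word_mat_conj r j : word_mat (word_conj r (gen_word j)) = mconj (gen_mat j) (word_mat r).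
Proof. by rewrite /word_conj !word_mat_cat word_mat_inv /= /letter_mat /= !mmulm1 /mconj mmulA. Qed.

Lemma feval_comm_nil u v : feval phi (word_comm u v) = [::] <-> mcomm (word_mat u) (word_mat v).
Proof.
rewrite feval_nil /word_comm !word_mat_cat !word_mat_inv.
by apply: mcomm_commutator; [case: (gamma2_word_mat u) | case: (gamma2_word_mat v)].
Qed.

Lemma word_mat_commute : (forall j j', mcomm (gen_mat j) (gen_mat j')) ->
  forall u v, mcomm (word_mat u) (word_mat v).
Proof.
move=> H.
have Hgen v j : mcomm (gen_mat j) (word_mat v).
  elim: v => [|l v IH] /=; first exact: mcomm_I.
  by apply: mcomm_mul => //; rewrite /letter_mat; case: l.2; [apply: mcomm_adj|]; exact: H.
move=> u v; elim: u => [|l u IH] /=; first exact: mcomm_sym (mcomm_I _).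
apply: mcomm_sym; apply: mcomm_mul; last exact: mcomm_sym.
by rewrite /letter_mat; case: l.2; [apply: mcomm_adj|]; apply: mcomm_sym; exact: Hgen.
Qed.

Lemma free_commutation_lemma r t : feval phi r <> [::] -> feval phi t <> [::] ->
  feval phi (word_comm r t) = [::] ->
  (forall j, feval phi (word_comm (word_conj r (gen_word j)) t) = [::]) ->
  ~ nonab_image phi.
Proof.
move=> Nr Nt /feval_comm_nil Crt Cconj [u [v NE]].
have NS w : feval phi w <> [::] -> nonscalar (word_mat w).
  move=> Nw; apply: nonscalar_det1; last exact: word_mat_neqN.
  - by case: (gamma2_word_mat w).
  - by move/feval_nil.
have Cgen : forall j j', mcomm (gen_mat j) (gen_mat j').
  apply: (@gamma2_family_commutes _ (word_mat t) (word_mat r)).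
  - by move=> j; exact: gamma2_Mf.
  - exact: NS.
  - exact: NS.
  - exact: mcomm_sym.
  - by move=> j; apply: mcomm_sym; rewrite -word_mat_conj; apply/feval_comm_nil.
by apply: NE; apply/feval_eq; rewrite !word_mat_cat; exact: word_mat_commute.
Qed.

End WordsInTheFreeGroup.

Section GroupWords.
Variable A : group.

Lemma ginv_unique (x y : A) : gmul x y = gone A -> y = ginv x.
Proof. by move=> H; rewrite -(gmul1g y) -(gmulVg x) -gmulA H gmulg1. Qed.

Lemma ginv_mul (x y : A) : ginv (gmul x y) = gmul (ginv y) (ginv x).
Proof. by apply/esym/ginv_unique; rewrite -gmulA (gmulA y) gmulgV gmul1g gmulgV. Qed.

Lemma ginvK (x : A) : ginv (ginv x) = x.
Proof. by apply/esym/ginv_unique; exact: gmulVg. Qed.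

Lemma ginv1 : ginv (gone A) = gone A.
Proof. by apply/esym/ginv_unique; exact: gmul1g. Qed.

Variables (k : nat) (g : 'I_k -> A).

Lemma geval_cat u v : geval g (u ++ v) = gmul (geval g u) (geval g v).
Proof. by elim: u => [|l u IH] /=; [rewrite gmul1g | rewrite IH gmulA]. Qed.

Lemma geval_inv u : geval g (word_inv u) = ginv (geval g u).
Proof.
elim: u => [|l u IH] /=; first by rewrite ginv1.
rewrite /word_inv map_cons rev_cons -cats1 geval_cat -/(word_inv u) IH /= gmulg1 ginv_mul.
by case: l.2; rewrite /= ?ginvK.
Qed.

Lemma geval_comm_l u v : geval g u = gone A -> geval g (word_comm u v) = gone A.
Proof. by move=> H; rewrite /word_comm !geval_cat !geval_inv H ginv1 !gmul1g gmulVg. Qed.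

Lemma geval_comm_r u v : geval g v = gone A -> geval g (word_comm u v) = gone A.
Proof. by move=> H; rewrite /word_comm !geval_cat !geval_inv H ginv1 !gmul1g gmulg1 gmulVg. Qed.

Lemma geval_conj u w : geval g u = gone A -> geval g (word_conj u w) = gone A.
Proof. by move=> H; rewrite /word_conj !geval_cat !geval_inv H gmul1g gmulVg. Qed.
End GroupWords.

Section Relators.
Variable k : nat.
Implicit Types (R : seq (word k)) (phi : 'I_k -> fword).

Lemma conjS0_self r R : r \in R -> r \in conjS0 R.
Proof. by move=> H; rewrite /conjS0 mem_cat H. Qed.

Lemma conjS0_conj r R j : r \in R -> word_conj r (gen_word j) \in conjS0 R.
Proof.
move=> H; rewrite /conjS0 mem_cat; apply/orP; right.
by apply: (allpairs_f (fun r j => word_conj r (gen_word j))); rewrite ?mem_enum.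
Qed.

Lemma conjS0P x R : x \in conjS0 R ->
  x \in R \/ exists r j, r \in R /\ x = word_conj r (gen_word j).
Proof.
rewrite /conjS0 mem_cat => /orP [->|/allpairsP [[r j] [/= Hr _ ->]]]; first by left.
by right; exists r, j.
Qed.

Lemma comm_set_f u v R R' : u \in R -> v \in R' -> word_comm u v \in comm_set R R'.
Proof. exact: (allpairs_f (@word_comm k)). Qed.

Lemma comm_setP x R R' : x \in comm_set R R' ->
  exists u v, [/\ u \in R, v \in R' & x = word_comm u v].
Proof. by move/allpairsP => [[u v] [/= hu hv ->]]; exists u, v. Qed.

Lemma kill_comm_l phi u v : feval phi u = [::] -> feval phi (word_comm u v) = [::].
Proof. by move/feval_nil => H; apply/feval_comm_nil; rewrite H; exact/mcomm_sym/mcomm_I. Qed.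

Lemma kill_comm_r phi u v : feval phi v = [::] -> feval phi (word_comm u v) = [::].
Proof. by move/feval_nil => H; apply/feval_comm_nil; rewrite H; exact: mcomm_I. Qed.

Lemma kills_conjS0 phi R : kills phi R -> kills phi (conjS0 R).
Proof.
move=> H x /conjS0P [/H //|[r [j [/H /feval_nil Hr ->]]]].
apply/feval_nil; rewrite word_mat_conj Hr /mconj mmulm1.
by apply: mul_adjm; case: (gamma2_Mf (phi j)).
Qed.

Lemma commutator_survives phi u c : nonab_image phi ->
  feval phi u <> [::] -> feval phi c <> [::] ->
  feval phi (word_comm u c) <> [::] \/
  exists j, feval phi (word_comm (word_conj u (gen_word j)) c) <> [::].
Proof.
move=> NA Nu Nc; apply: NNPP => /not_or_and [/NNPP Cu /not_ex_all_not Cj].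
by apply: (free_commutation_lemma Nu Nc Cu) => // j; apply: NNPP.
Qed.

Section Nesting.
Variables (n : nat) (R : 'I_n -> seq (word k)) (phi : 'I_k -> fword).

Lemma Rnat_ord (i : 'I_n) : Rnat R i = R i.
Proof. by rewrite /Rnat valK. Qed.

Lemma kills_Rtilde_aux m0 : kills phi (Rnat R m0) ->
  forall m, m0 <= m -> kills phi (Rtilde_aux R m).
Proof.
move=> H0; elim=> [|m IH] Hm; first by move: Hm H0; rewrite leqn0 => /eqP ->.
move=> x /= /comm_setP [u [v [hu hv ->]]].
case: (ltngtP m0 m.+1) Hm => // [Hlt|Heq] _.
- exact/kill_comm_r/(IH _ _ hv).
- by apply/kill_comm_l/(kills_conjS0 _ hu); rewrite -Heq.
Qed.

Lemma kills_some_R m : nonab_image phi -> kills phi (Rtilde_aux R m) ->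
  exists2 i, i <= m & kills phi (Rnat R i).
Proof.
move=> NA; elim: m => [|m IH] H; first by exists 0.
have [Hall|NK] := classic (kills phi (Rnat R m.+1)); first by exists m.+1.
have [r Hr] := not_all_ex_not _ _ NK; have [hr Nr] := imply_to_and _ _ Hr.
have [i Hi Ki] : exists2 i, i <= m & kills phi (Rnat R i).
  apply: IH => t ht; apply: NNPP => Nt.
  have [] := commutator_survives NA Nr Nt.
  - by apply; apply/H/comm_set_f/ht/conjS0_self.
  - by case=> j; apply; apply/H/comm_set_f/ht/conjS0_conj.
by exists i => //; exact: leqW.
Qed.
End Nesting.
End Relators.

Section Factors.
Variables (n : nat) (A : 'I_n -> group) (k : nat) (s : 'I_k -> forall i : 'I_n, A i).
Variable phi : 'I_k -> fword.
Hypothesis nonab : nonab_image phi.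

Definition in_ker_p (i : 'I_n) (u : word k) := geval (fun j => s j i) u = gone (A i).

Lemma survivor_in_kernels : (forall i, exists2 u, in_ker_p i u & feval phi u <> [::]) ->
  forall m, m < n ->
  exists2 c, (forall i : 'I_n, i <= m -> in_ker_p i c) & feval phi c <> [::].
Proof.
move=> W; elim=> [|m IH] Hm.
  have [u Hu Nu] := W (Ordinal Hm); exists u => // i; rewrite leqn0 => /eqP Ei.
  by have -> : i = Ordinal Hm by apply: val_inj.
have [c Hc Nc] := IH (ltnW Hm).
have [u Hu Nu] := W (Ordinal Hm).
have [u' Hu' Nu'] : exists2 u', in_ker_p (Ordinal Hm) u' & feval phi (word_comm u' c) <> [::].
  have [N|[j N]] := commutator_survives nonab Nu Nc; first by exists u.
  by exists (word_conj u (gen_word j)) => //; exact: geval_conj.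
exists (word_comm u' c) => // i; case: (ltngtP i m.+1) => // [Hlt|Heq] _.
- exact/geval_comm_r/Hc.
- have -> : i = Ordinal Hm by apply: val_inj.
  exact: geval_comm_l.
Qed.

(* A homomorphism G -> F(a, b) with non-abelian image factors through one
   of the projections p_i, since the kernels of the p_i intersect trivially. *)
Lemma factors_through_some_p : 0 < n -> factors_through_G s phi ->
  exists i, forall u, in_ker_p i u -> feval phi u = [::].
Proof.
move=> n0 Hf; apply: NNPP => NE.
have W i : exists2 u, in_ker_p i u & feval phi u <> [::].
  apply: NNPP => N; apply: NE; exists i => u Hu; apply: NNPP => Nu.
  by apply: N; exists u.
have [|c Hc Nc] := survivor_in_kernels W (m := n.-1); first by rewrite prednK.
by apply/Nc/Hf => i; apply: Hc; rewrite -ltnS prednK.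
Qed.
End Factors.

Lemma factors_through_G_iff_kills_Rtilde n (A : 'I_n -> group) k
    (s : 'I_k -> forall i : 'I_n, A i) (R : 'I_n -> seq (word k)) (phi : 'I_k -> fword) :
  0 < n ->
  (forall i w, in_ker_p s i w <-> ker_RFna_pres (R i) w) ->
  nonab_image phi -> factors_through_G s phi <-> kills phi (Rtilde R).
Proof.
move=> n0 HR NA; have lt_pred : n.-1 < n by rewrite prednK.
split => [Hf|Hk].
- have [i Hi] := factors_through_some_p NA n0 Hf.
  apply: (@kills_Rtilde_aux _ _ _ _ i); last by rewrite -ltnS prednK.
  by rewrite Rnat_ord => r hr; apply/Hi/HR => psi Kp _; exact: Kp.
- have [i Hi Ki] := kills_some_R NA Hk.
  have Hin : i < n by exact: leq_ltn_trans lt_pred.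
  move: Ki; rewrite -[i]/(nat_of_ord (Ordinal Hin)) Rnat_ord => Ki u Hu.
  exact: (proj1 (HR (Ordinal Hin) u) (Hu _)).
Qed.

Theorem mainTheorem9 (n : nat) (A : 'I_n -> group) (k : nat)
  (s : 'I_k -> forall i : 'I_n, A i) (R : 'I_n -> seq (word k)) :
  2 <= n ->
  (* p_i(G) = RF_na(<S | R_i>) compatibly with the projections from F(S) *)
  (forall (i : 'I_n) (w : word k),
      geval (fun j => s j i) w = gone (A i) <-> ker_RFna_pres (R i) w) ->
  (* RF_na(G) = RF_na(<S | R~>) compatibly with the projections from F(S) *)
  forall w : word k, ker_RFna_G s w <-> ker_RFna_pres (Rtilde R) w.
Proof.
move=> n2 HR w; have n0 : 0 < n by exact: leq_trans n2.
have Key phi := @factors_through_G_iff_kills_Rtilde n A k s R phi n0 HR.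
by split => Hw phi H1 H2; apply: Hw => //; apply/(Key phi H2).
Qed.
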